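(* Let $f\colon \mathbb{R}^n \times \mathbb{R}^p \rightarrow \overline{\mathbb{R}}$ be a proper nearly convex function and $G\colon \mathbb{R}^n \rightrightarrows \mathbb{R}^p$ a nearly convex set-valued mapping. Let $m(x)=\inf\{f(x,y)\mid y\in G(x)\}$ (with $\inf\emptyset=\infty$), and assume $m$ is finite at $\bar x \in \mathbb{R}^n$. For $\eta>0$ let $S_\eta(\bar x)= \{ y \in G(\bar x) \mid f (\bar x, y) \le m (\bar x)+\eta \}$, and for $\varepsilon,\eta\ge0$ let $\varGamma(\eta+\varepsilon)=\{(\gamma_1, \gamma_2) \mid \gamma_1 \ge 0,\ \gamma_2 \ge 0,\ \gamma_1+\gamma_2=\eta+\varepsilon\}$. If $$\mathrm{ri}(\mathrm{dom}\, f ) \cap \mathrm{ri}(\mathrm{gph}\, G ) \neq\emptyset,$$ then for every $\varepsilon \ge 0$, $$\begin{aligned}\partial _\varepsilon m(\bar x)&=\bigcap_{\eta >0}\ \bigcap_{ y \in S_\eta (\bar x)}\ \bigcup_{(\gamma_1, \gamma_2) \in \varGamma(\eta+\varepsilon)}\big\{\xi\in \mathbb{R}^n \mid (\xi,0) \in \partial_{\gamma_1}f(\bar x,y) +N_{\gamma_2}((\bar x, y); \mathrm{gph}\, G ) \big\}\\ &=\bigcap_{\eta >0}\ \bigcup_{y \in \mathbb{R}^p}\ \bigcup_{(\gamma_1, \gamma_2) \in \varGamma(\eta+\varepsilon)}\big\{\xi \in \mathbb{R}^n \mid (\xi,0) \in \partial_{\gamma_1}f(\bar x, y) +N_{\gamma_2}((\bar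 x, y); \mathrm{gph}\, G ) \big\}.\end{aligned}$$
   Context: $\overline{\mathbb{R}}=[-\infty,\infty]$; proper means nonempty domain $\mathrm{dom}\,f=\{z\mid f(z)<\infty\}$ and never $-\infty$. A set $D$ is nearly convex if there is a convex $E$ with $E\subset D\subset\overline{E}$; a function is nearly convex if its epigraph is nearly convex; a set-valued mapping is nearly convex if its graph $\mathrm{gph}\,G=\{(x,y)\mid y\in G(x)\}$ is nearly convex. $\mathrm{ri}\,D=\{a\in D\mid\exists\delta>0,\ B(a;\delta)\cap\mathrm{aff}\,D\subset D\}$. For $\psi$ on $\mathbb{R}^k$, $\gamma\ge0$ and $\bar z$ with $\psi(\bar z)$ finite, $\partial_\gamma\psi(\bar z)=\{\zeta\mid\langle\zeta,z-\bar z\rangle-\gamma\le\psi(z)-\psi(\bar z)\ \forall z\}$ (the set-builder conditions are understood for those $y$ at which these objects are defined). For nonempty $\Omega$ and $\bar z\in\Omega$, $N_\gamma(\bar z;\Omega)=\{\zeta\mid\langle\zeta,z-\bar z\rangle\le\gamma\ \forall z\in\Omega\}$. Sums of sets are Minkowski sums. *)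

From HB Require Import structures.
From mathcomp Require Import all_boot all_order all_algebra.
From mathcomp Require Import all_classical all_reals ereal.
Set Implicit Arguments. Unset Strict Implicit. Unset Printing Implicit Defensive.
Import Order.TTheory GRing.Theory Num.Theory.
Local Open Scope classical_set_scope.
Local Open Scope ring_scope.

Section Defs.
Variable R : realType.

Definition dotv (k : nat) (u v : 'rV[R]_k) : R := \sum_(i < k) u ord0 i * v ord0 i.

Definition eball (k : nat) (a : 'rV[R]_k) (d : R) : set 'rV[R]_k :=
  [set z | dotv (z - a) (z - a) < d ^+ 2].

Definition convex_set (k : nat) (E : set 'rV[R]_k) : Prop :=
  forall x y, E x -> E y -> forall t : R, 0 <= t -> t <= 1 -> E (t *: x + (1 - t) *: y).

Definition eclosure (k : nat) (E : set 'rV[R]_k) : set 'rV[R]_k :=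
  [set x | forall d : R, 0 < d -> exists2 y, E y & eball x d y].

Definition aff (k : nat) (D : set 'rV[R]_k) : set 'rV[R]_k :=
  [set x | exists (N : nat) (c : 'I_N -> R) (v : 'I_N -> 'rV[R]_k),
     [/\ forall i, D (v i), \sum_(i < N) c i = 1 & x = \sum_(i < N) c i *: v i]].

Definition ri (k : nat) (D : set 'rV[R]_k) : set 'rV[R]_k :=
  [set a | D a /\ exists2 d : R, 0 < d & eball a d `&` aff D `<=` D].

Definition nearly_convex_set (k : nat) (D : set 'rV[R]_k) : Prop :=
  exists E : set 'rV[R]_k, [/\ convex_set E, E `<=` D & D `<=` eclosure E].

(* epigraph of f : R^k -> \bar R, as a subset of R^(k+1) = R^k x R *)
Definition epi (k : nat) (f : 'rV[R]_k -> \bar R) : set 'rV[R]_(k + 1) :=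
  [set w | (f (lsubmx w) <= (rsubmx w ord0 ord0)%:E)%E].

Definition nearly_convex_fun (k : nat) (f : 'rV[R]_k -> \bar R) : Prop :=
  nearly_convex_set (epi f).

Definition edom (k : nat) (f : 'rV[R]_k -> \bar R) : set 'rV[R]_k :=
  [set z | (f z < +oo)%E].

Definition proper_fun (k : nat) (f : 'rV[R]_k -> \bar R) : Prop :=
  (exists z, edom f z) /\ (forall z, f z <> -oo%E).

(* graph of G : R^n => R^p, as a subset of R^(n+p) = R^n x R^p *)
Definition gph (n p : nat) (G : 'rV[R]_n -> set 'rV[R]_p) : set 'rV[R]_(n + p) :=
  [set z | G (lsubmx z) (rsubmx z)].

(* gamma-subdifferential; empty when psi zb is not finite *)
Definition esubdiff (k : nat) (psi : 'rV[R]_k -> \bar R) (gamma : R) (zb : 'rV[R]_k)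
  : set 'rV[R]_k :=
  [set zeta | psi zb \is a fin_num /\
     forall z, ((dotv zeta (z - zb) - gamma)%:E <= psi z - psi zb)%E].

(* gamma-normal cone; empty when zb is not in Omega *)
Definition enormal (k : nat) (gamma : R) (zb : 'rV[R]_k) (Omega : set 'rV[R]_k)
  : set 'rV[R]_k :=
  [set zeta | Omega zb /\ forall z, Omega z -> dotv zeta (z - zb) <= gamma].

Definition msum (k : nat) (A B : set 'rV[R]_k) : set 'rV[R]_k :=
  [set z | exists a b, [/\ A a, B b & z = a + b]].

Definition optval (n p : nat) (f : 'rV[R]_(n + p) -> \bar R)
  (G : 'rV[R]_n -> set 'rV[R]_p) (x : 'rV[R]_n) : \bar R :=
  ereal_inf [set f (row_mx x y) | y in G x].

Definition Seta (n p : nat) (f : 'rV[R]_(n + p) -> \bar R)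
  (G : 'rV[R]_n -> set 'rV[R]_p) (eta : R) (xb : 'rV[R]_n) : set 'rV[R]_p :=
  [set y | G xb y /\ (f (row_mx xb y) <= optval f G xb + eta%:E)%E].

Definition Gam (t : R) : set (R * R) :=
  [set g | [/\ 0 <= g.1, 0 <= g.2 & g.1 + g.2 = t]].

Definition xiset (n p : nat) (f : 'rV[R]_(n + p) -> \bar R)
  (G : 'rV[R]_n -> set 'rV[R]_p) (xb : 'rV[R]_n) (y : 'rV[R]_p) (g : R * R)
  : set 'rV[R]_n :=
  [set xi | msum (esubdiff f g.1 (row_mx xb y)) (enormal g.2 (row_mx xb y) (gph G))
              (row_mx xi 0)].

End Defs.

From HB Require Import structures.
From mathcomp Require Import all_boot all_order all_algebra.
From mathcomp Require Import all_classical all_reals ereal.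
From mathcomp Require Import ring lra.
Set Implicit Arguments. Unset Strict Implicit. Unset Printing Implicit Defensive.
Import Order.TTheory GRing.Theory Num.Theory.
Local Open Scope classical_set_scope.
Local Open Scope ring_scope.

(* If xi is an eps-subgradient of m at xb and y is eta-optimal, then
   f(z) >= alpha + <(xi,0), z> on gph G with alpha = f(xb,y) - <xi,xb> - eta - eps.
   Under the qualification condition this inequality can be split by an affine
   separation: there are b and c with f(z) - <(xi,0) + b, z> >= c >= alpha - <b, z'>
   for z in dom f and z' in gph G.  The slacks of (xb,y) in the two inequalities
   are gamma1 + gamma2 = eta + eps, and they witness (xi,0) + b in
   d_gamma1 f(xb,y) and -b in N_gamma2((xb,y); gph G).  The separation is a
   finite-dimensional Hahn-Banach argument (a linear minorant extended one
   coordinate at a time) applied to the pairs (x - z', s - <(xi,0),x> - alpha),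
   (x,s) and z' ranging over convex cores of epi f and gph G; a common relative
   interior point makes this set of pairs symmetric enough around 0.
   Conversely each such decomposition makes xi an (eta+eps)-subgradient of m at
   xb, and intersecting over eta > 0 gives back d_eps m(xb). *)

Section InnerProduct.
Variable R : realType.
Implicit Types k : nat.

Lemma dotvDl k (u v w : 'rV[R]_k) : dotv (u + v) w = dotv u w + dotv v w.
Proof. by rewrite /dotv -big_split; apply: eq_bigr => i _; rewrite mxE mulrDl. Qed.

Lemma dotvDr k (u v w : 'rV[R]_k) : dotv w (u + v) = dotv w u + dotv w v.
Proof. by rewrite /dotv -big_split; apply: eq_bigr => i _; rewrite mxE mulrDr. Qed.

Lemma dotvZl k a (u w : 'rV[R]_k) : dotv (a *: u) w = a * dotv u w.
Proof. by rewrite /dotv mulr_sumr; apply: eq_bigr => i _; rewrite mxE mulrA. Qed.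

Lemma dotvZr k a (u w : 'rV[R]_k) : dotv w (a *: u) = a * dotv w u.
Proof. by rewrite /dotv mulr_sumr; apply: eq_bigr => i _; rewrite mxE mulrCA. Qed.

Lemma dotvNl k (u w : 'rV[R]_k) : dotv (- u) w = - dotv u w.
Proof. by rewrite -scaleN1r dotvZl mulN1r. Qed.

Lemma dotvNr k (u w : 'rV[R]_k) : dotv w (- u) = - dotv w u.
Proof. by rewrite -scaleN1r dotvZr mulN1r. Qed.

Lemma dotvBl k (u v w : 'rV[R]_k) : dotv (u - v) w = dotv u w - dotv v w.
Proof. by rewrite dotvDl dotvNl. Qed.

Lemma dotvBr k (u v w : 'rV[R]_k) : dotv w (u - v) = dotv w u - dotv w v.
Proof. by rewrite dotvDr dotvNr. Qed.

Lemma dotv0l k (w : 'rV[R]_k) : dotv 0 w = 0.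
Proof. by rewrite /dotv big1 // => i _; rewrite mxE mul0r. Qed.

Lemma dotvC k (u w : 'rV[R]_k) : dotv u w = dotv w u.
Proof. by apply: eq_bigr => i _; rewrite mulrC. Qed.

Lemma dotv_ge0 k (u : 'rV[R]_k) : 0 <= dotv u u.
Proof. by rewrite /dotv sumr_ge0 // => j _; rewrite -expr2 sqr_ge0. Qed.

Lemma dotv_delta k (c : 'rV[R]_k) j : dotv c (delta_mx 0 j) = c ord0 j.
Proof.
rewrite /dotv (bigD1 j) //= big1 ?addr0 => [|i ij]; rewrite mxE ?eqxx /=.
  by rewrite mulr1.
by rewrite (negPf ij) mulr0.
Qed.

Lemma dotv_row_mx m k (a c : 'rV[R]_m) (b d : 'rV[R]_k) :
  dotv (row_mx a b) (row_mx c d) = dotv a c + dotv b d.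
Proof.
by rewrite /dotv big_split_ord /=; congr (_ + _); apply: eq_bigr => i _;
  rewrite ?row_mxEl ?row_mxEr.
Qed.

Lemma dotv_hsubmx m k (u v : 'rV[R]_(m + k)) :
  dotv u v = dotv (lsubmx u) (lsubmx v) + dotv (rsubmx u) (rsubmx v).
Proof. by rewrite -{1}(hsubmxK u) -{1}(hsubmxK v) dotv_row_mx. Qed.

End InnerProduct.

Section CoordinateBounds.
Variable R : realType.
Implicit Types k : nat.

Lemma eball_coord k (a x : 'rV[R]_k) d : 0 <= d -> eball a d x ->
  forall i, `|x ord0 i - a ord0 i| < d.
Proof.
move=> d0 xa i; have y2 : (x - a) ord0 i ^+ 2 <= dotv (x - a) (x - a).
  rewrite /dotv (bigD1 i) //= -expr2 lerDl sumr_ge0 // => j _.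
  by rewrite -expr2 sqr_ge0.
move: (le_lt_trans y2 xa); rewrite !mxE -real_normK ?num_real // => h.
by rewrite ltr_pXn2r ?nnegrE ?normr_ge0 in h.
Qed.

Lemma norm_dotv_le k (b u : 'rV[R]_k) d : (forall i, `|u ord0 i| <= d) ->
  `|dotv b u| <= (\sum_i `|b ord0 i|) * d.
Proof.
move=> ud; rewrite /dotv mulr_suml (le_trans (ler_norm_sum _ _ _)) //.
by apply: ler_sum => i _; rewrite normrM ler_wpM2l.
Qed.

Definition mxnorm1 k m (M : 'M[R]_(k, m)) : R := \sum_i \sum_j `|M i j|.

Lemma mxnorm1_ge0 k m (M : 'M[R]_(k, m)) : 0 <= mxnorm1 M.
Proof. by apply: sumr_ge0 => i _; apply: sumr_ge0. Qed.

Lemma norm_mulmx_le k m (u : 'rV[R]_k) (M : 'M[R]_(k, m)) d :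
  (forall i, `|u ord0 i| <= d) -> forall j, `|(u *m M) ord0 j| <= mxnorm1 M * d.
Proof.
move=> ud j; rewrite mxE (le_trans (ler_norm_sum _ _ _)) // /mxnorm1 mulr_suml.
apply: ler_sum => i _; rewrite normrM.
have d0 : 0 <= d by apply: le_trans (ud i).
apply: (le_trans (ler_wpM2r (normr_ge0 _) (ud i))).
by rewrite mulrC ler_wpM2r // (bigD1 j) //= lerDl sumr_ge0.
Qed.

Lemma ge0_of_small (y K : R) : (forall d, 0 < d -> - (K * d) <= y) -> 0 <= y.
Proof.
move=> yK; apply/ler_addgt0Pr => e e0.
have K1 : 0 < `|K| + 1 by rewrite ltr_wpDl.
have Ke : K * (e / (`|K| + 1)) <= e.
  rewrite mulrA ler_pdivrMr // mulrDr mulr1.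
  by have := ler_norm K; have := ltW e0; nra.
by have := yK _ (divr_gt0 e0 K1); lra.
Qed.

Lemma eq0_of_small (y K : R) : (forall d, 0 < d -> `|y| <= K * d) -> y = 0.
Proof.
move=> yK; apply/normr0_eq0/eqP; rewrite eq_le normr_ge0 andbT -oppr_ge0.
by apply: (ge0_of_small (K := K)) => d d0; rewrite lerN2 yK.
Qed.

Lemma small_multiple k (u : 'rV[R]_k) rho : 0 < rho ->
  exists2 r, 0 < r & forall s j, 0 <= s <= r -> `|s * u ord0 j| <= rho.
Proof.
move=> rho0; have M1 : 0 < \sum_i `|u ord0 i| + 1 by rewrite ltr_wpDl ?sumr_ge0.
exists (rho / (\sum_i `|u ord0 i| + 1)) => [|s j /andP[s0 sr]]; first exact: divr_gt0.
have uj : `|u ord0 j| <= \sum_i `|u ord0 i| + 1.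
  by rewrite ler_wpDr // (bigD1 j) //= lerDl sumr_ge0.
rewrite normrM ger0_norm // (le_trans (ler_wpM2r (normr_ge0 _) sr)) //.
by rewrite mulrAC ler_pdivrMr // ler_wpM2l // ltW.
Qed.

End CoordinateBounds.

Definition convex_rel (R : realType) N (D : 'rV[R]_N -> R -> Prop) :=
  forall w1 t1 w2 t2 (th : R), 0 <= th -> th <= 1 -> D w1 t1 -> D w2 t2 ->
  D (th *: w1 + (1 - th) *: w2) (th * t1 + (1 - th) * t2).

Definition vanish_from (R : realType) N k (w : 'rV[R]_N) :=
  forall j : 'I_N, (k <= j)%N -> w ord0 j = 0.

Section LinearMinorant.
Variables (R : realType) (N : nat) (D : 'rV[R]_N -> R -> Prop).
Hypothesis D_convex : convex_rel D.
Hypothesis D_opposite :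
  forall w t, D w t -> exists2 r, 0 < r & exists t', D (- (r *: w)) t'.

Definition minorant_from k (c : 'rV[R]_N) :=
  forall w t, D w t -> vanish_from k w -> dotv c w <= t.

Section Step.
Variables (k : nat) (kN : (k < N)%N) (c : 'rV[R]_N).
Hypothesis c_minorant : minorant_from k c.

Let j0 : 'I_N := Ordinal kN.
Let e : 'rV[R]_N := delta_mx 0 j0.

(* the j0-th coordinate that makes the extended minorant exact at (w, t) *)
Let slope (w : 'rV[R]_N) (t : R) := (t - dotv c w + w ord0 j0 * dotv c e) / w ord0 j0.

Lemma vanish_fromS (w : 'rV[R]_N) :
  vanish_from k.+1 w -> w ord0 j0 = 0 -> vanish_from k w.
Proof.
move=> wk w0 j; rewrite leq_eqVlt => /orP[/eqP kj|]; last exact: wk.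
by rewrite (_ : j = j0) //; apply: val_inj.
Qed.

Lemma slope_le w1 t1 w2 t2 : D w1 t1 -> D w2 t2 ->
  vanish_from k.+1 w1 -> vanish_from k.+1 w2 -> w1 ord0 j0 < 0 -> 0 < w2 ord0 j0 ->
  slope w1 t1 <= slope w2 t2.
Proof.
move=> D1 D2 w1k w2k s0 tau0.
set s := - w1 ord0 j0; set tau := w2 ord0 j0.
have sp : 0 < s by rewrite oppr_gt0.
have st0 : 0 < s + tau by rewrite addr_gt0.
pose th := tau / (s + tau).
have th0 : 0 <= th by rewrite divr_ge0 ?ltW.
have th1 : th <= 1 by rewrite ler_pdivrMr // mul1r lerDr ltW.
have th1E : 1 - th = s / (s + tau) by rewrite /th; field; rewrite gt_eqF.
have w1E : w1 ord0 j0 = - s by rewrite opprK.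
have wk : vanish_from k (th *: w1 + (1 - th) *: w2).
  apply: vanish_fromS => [j kj|]; first by rewrite !mxE w1k ?w2k // !mulr0 addr0.
  by rewrite !mxE w1E -/tau th1E /th; field; rewrite gt_eqF.
have := c_minorant (D_convex th0 th1 D1 D2) wk.
rewrite dotvDr !dotvZr th1E /th => h.
have {h} h : tau * dotv c w1 + s * dotv c w2 <= tau * t1 + s * t2.
  have E X Y : tau / (s + tau) * X + s / (s + tau) * Y = (tau * X + s * Y) / (s + tau).
    by field; rewrite gt_eqF.
  by move: h; rewrite !E ler_pM2r // invr_gt0.
have -> : slope w1 t1 = (dotv c w1 + s * dotv c e - t1) / s.
  by rewrite /slope w1E; field; rewrite gt_eqF.
rewrite /slope -/tau ler_pdivrMr // mulrAC ler_pdivlMr //; nra.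
Qed.

Lemma opposite_sign w t : D w t -> vanish_from k.+1 w -> w ord0 j0 != 0 ->
  exists w' t', [/\ D w' t', vanish_from k.+1 w' & w' ord0 j0 * w ord0 j0 < 0].
Proof.
move=> Dw wk w0; have [r r0 [t' Dw']] := D_opposite Dw.
exists (- (r *: w)), t'; split => // [j kj|].
  by rewrite !mxE wk // mulr0 oppr0.
by rewrite !mxE mulNr -mulrA oppr_lt0 mulr_gt0 // -expr2 exprn_even_gt0.
Qed.

Lemma minorant_from_step : exists c', minorant_from k.+1 c'.
Proof.
pose side (sgn : R -> Prop) l :=
  exists w t, [/\ D w t, vanish_from k.+1 w, sgn (w ord0 j0) & l = slope w t].
pose L := side (fun x => x < 0); pose U := side (fun x => 0 < x).
have LU l u : L l -> U u -> l <= u.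
  by move=> [w1 [t1 [D1 w1k s1 ->]]] [w2 [t2 [D2 w2k s2 ->]]]; apply: slope_le.
have L_ne : U !=set0 -> L !=set0.
  move=> [_ [w [t [Dw wk w0 _]]]].
  have [w' [t' [Dw' w'k]]] := opposite_sign Dw wk (lt0r_neq0 w0).
  by rewrite pmulr_llt0 // => w'0; exists (slope w' t'), w', t'.
have U_ne : L !=set0 -> U !=set0.
  move=> [_ [w [t [Dw wk w0 _]]]].
  have [w' [t' [Dw' w'k]]] := opposite_sign Dw wk (ltr0_neq0 w0).
  by rewrite nmulr_llt0 // => w'0; exists (slope w' t'), w', t'.
exists (c + (sup L - dotv c e) *: e) => w t Dw wk.
rewrite dotvDl dotvZl [dotv e w]dotvC (dotv_delta w).
have [w0|w0|w0] := ltrgtP (w ord0 j0) 0.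
- have Lw : L (slope w t) by exists w, t.
  have [u Uu] := U_ne (ex_intro _ _ Lw).
  have supL : has_sup L by split; [exists (slope w t) | exists u => l Ll; exact: LU Ll Uu].
  have := sup_upper_bound supL Lw.
  by rewrite /slope ler_ndivrMr //; lra.
- have Uw : U (slope w t) by exists w, t.
  have : sup L <= slope w t.
    by apply: ge_sup; [apply: L_ne; exists (slope w t) | move=> l Ll; exact: LU Ll Uw].
  by rewrite /slope ler_pdivlMr //; lra.
- by rewrite w0 mulr0 addr0; apply: c_minorant => //; apply: vanish_fromS.
Qed.

End Step.

Lemma linear_minorant : (forall t, D 0 t -> 0 <= t) ->
  exists b, forall w t, D w t -> dotv b w <= t.
Proof.
move=> D0; suff [c c_min] : exists c, minorant_from N c.
  by exists c => w t Dw; apply: c_min => // j; rewrite leqNgt ltn_ord.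
suff: forall k, (k <= N)%N -> exists c, minorant_from k c by apply.
elim=> [_|k IH kN]; last first.
  by have [c c_min] := IH (ltnW kN); apply: minorant_from_step c_min.
exists 0 => w t Dw w0; rewrite dotv0l; apply: D0.
suff <- : w = 0 by [].
by apply/matrixP => i j; rewrite (ord1 i) mxE; apply: w0.
Qed.

End LinearMinorant.

Section RelativeInterior.
Variable R : realType.
Implicit Types (k m : nat).

Definition relbox_in k m (E : set 'rV[R]_k) (B : 'M[R]_(m, k)) (b : 'rV[R]_k) rho :=
  forall v : 'rV[R]_k, (v <= B)%MS -> (forall j, `|v ord0 j| <= rho) -> E (b + v).

Lemma convex_sum_mem k (E : set 'rV[R]_k) e0 : convex_set E -> E e0 ->
  forall m (v : 'I_m -> 'rV[R]_k) (mu : 'I_m -> R), (forall i, E (e0 + v i)) ->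
  (forall i, 0 <= mu i) -> \sum_i mu i <= 1 -> E (e0 + \sum_i mu i *: v i).
Proof.
move=> cE E0; elim => [|m IH] v mu Ev mu0; first by rewrite !big_ord0 addr0.
rewrite !big_ord_recr /=; set mm := mu ord_max => mu1.
have s0 : 0 <= \sum_(i < m) mu (widen_ord (leqnSn m) i) by apply: sumr_ge0.
have [mm1|mm1] := eqVneq mm 1.
  have s00 : \sum_(i < m) mu (widen_ord (leqnSn m) i) = 0.
    by apply/eqP; rewrite eq_le s0 andbT; move: mu1; rewrite mm1; lra.
  rewrite mm1 big1 ?add0r ?scale1r // => i _.
  by rewrite (psumr_eq0P _ s00) ?scale0r // => j _; apply: mu0.
have mmlt : mm < 1 by rewrite lt_neqAle mm1 /=; move: mu1; lra.
have pos : 0 < 1 - mm by rewrite subr_gt0.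
have Ex : E (e0 + \sum_(i < m) (mu (widen_ord (leqnSn m) i) / (1 - mm)) *:
    v (widen_ord (leqnSn m) i)).
  apply: IH => [i|i|]; first exact: Ev.
    by rewrite divr_ge0 ?mu0 ?ltW.
  by rewrite -mulr_suml ler_pdivrMr // mul1r; lra.
have := cE _ _ Ex (Ev ord_max) (1 - mm).
rewrite subr_ge0 (ltW mmlt) lerBlDr lerDl mu0 => /(_ isT isT).
have -> : 1 - (1 - mm) = mm by ring.
congr E; rewrite scalerDr scaler_sumr scalerDr addrACA -scalerDl subrK scale1r.
congr (_ + (_ + _)); apply: eq_bigr => i _.
by rewrite scalerA mulrCA divff ?mulr1 // gt_eqF.
Qed.

Lemma spanning_rows k (E : set 'rV[R]_k) e0 :
  exists m (B : 'M[R]_(m, k)),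
    (forall i, E (e0 + row i B)) /\ forall e, E e -> (e - e0 <= B)%MS.
Proof.
pose P r := exists m (B : 'M[R]_(m, k)), (forall i, E (e0 + row i B)) /\ \rank B = r.
have P0 : exists r, `[< P r >].
  by exists 0%N; apply/asboolP; exists 0%N, 0; split; [case | exact: mxrank0].
have Pk r : `[< P r >] -> (r <= k)%N.
  by move=> /asboolP [m [B [_ <-]]]; apply: rank_leq_col.
case: (ex_maxnP P0 Pk) => r /asboolP [m [B [EB <-]]] rmax.
exists m, B; split => // e Ee; apply: contraT => eB.
pose B' := col_mx B (e - e0).
have BB' : (B <= B')%MS by rewrite -addsmxE addsmxSl.
have : (\rank B < \rank B')%N.
  by apply: rank_ltmx; rewrite ltmxE BB' col_mx_sub submx_refl (negPf eB).
rewrite ltnNge rmax //; apply/asboolP; exists (m + 1)%N, B'; split => // i.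
by rewrite -(splitK i); case: (fintype.split i) => j /=;
  rewrite ?rowKu // rowKd row_id addrC subrK.
Qed.

Lemma eclosure_submx k m (E : set 'rV[R]_k) (B : 'M[R]_(m, k)) e0 :
  (forall e, E e -> (e - e0 <= B)%MS) -> forall x, eclosure E x -> (x - e0 <= B)%MS.
Proof.
move=> EB x Ex; rewrite submxE; apply/eqP/matrixP => i j; rewrite (ord1 i) [RHS]mxE.
apply: (@eq0_of_small _ _ (mxnorm1 (cokermx B))) => d d0.
have [e Ee xe] := Ex d d0.
have -> : (x - e0) *m cokermx B = (x - e) *m cokermx B.
  move: (EB e Ee); rewrite submxE => /eqP eB.
  have -> : x - e0 = (x - e) + (e - e0) by rewrite addrA subrK.
  by rewrite mulmxDl eB addr0.
apply: norm_mulmx_le => l; rewrite !mxE distrC ltW //.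
by apply: eball_coord (ltW d0) xe l.
Qed.

Lemma relbox_of_coords k m (E : set 'rV[R]_k) (B : 'M[R]_(m, k)) b rho :
  0 < rho -> (forall c : 'rV[R]_m, (forall i, `|c ord0 i| <= rho) -> E (b + c *m B)) ->
  relbox_in E B b (rho / (mxnorm1 (pinvmx B) + 1)).
Proof.
move=> rho0 Ec v vB vs; rewrite -(mulmxKpV vB); apply: Ec => i.
apply: (le_trans (norm_mulmx_le _ vs i)).
have K1 : 0 < mxnorm1 (pinvmx B) + 1 by rewrite ltr_wpDl ?mxnorm1_ge0.
by rewrite mulrCA ler_piMr ?ltW // ltr_pdivrMr // mul1r ltrDl.
Qed.

Lemma simplex_relbox k m (E : set 'rV[R]_k) (B : 'M[R]_(m, k)) e0 :
  convex_set E -> E e0 -> (forall i, E (e0 + row i B)) ->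
  exists b0, exists2 rho, 0 < rho & relbox_in E B b0 rho.
Proof.
move=> cE Ee0 EB.
pose M : R := m.+1%:R; pose x1 := M^-1; pose rho := x1 ^+ 2.
have M0 : 0 < M by rewrite ltr0n.
have x10 : 0 < x1 by rewrite invr_gt0.
have x11 : x1 <= 1 by rewrite invr_le1 ?unitf_gt0 // ler1n.
have rho0 : 0 < rho by rewrite exprn_gt0.
have Mx : M * x1 = 1 by rewrite divff // gt_eqF.
exists (e0 + x1 *: \sum_i row i B), (rho / (mxnorm1 (pinvmx B) + 1)).
  by rewrite divr_gt0 // ltr_wpDl ?mxnorm1_ge0.
apply: relbox_of_coords => // c cs.
have -> : e0 + x1 *: \sum_i row i B + c *m B = e0 + \sum_i (x1 + c ord0 i) *: row i B.
  rewrite mulmx_sum_row scaler_sumr -addrA -big_split /=; congr (_ + _).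
  by apply: eq_bigr => i _; rewrite scalerDl.
have cb i : - rho <= c ord0 i <= rho by rewrite -ler_norml.
apply: convex_sum_mem => // [i|].
  have := cb i; have : x1 ^+ 2 <= x1 by rewrite expr2 ler_piMr // ltW.
  by rewrite /rho; lra.
have mM : m%:R = M - 1 by rewrite /M -natr1 addrK.
have mx1 : m%:R * x1 = 1 - x1 by rewrite mM mulrBl Mx mul1r.
have mrho : m%:R * rho = x1 - rho by rewrite mM mulrBl /rho expr2 mulrA Mx !mul1r.
rewrite big_split /= sumr_const card_ord -mulr_natl mx1.
have : \sum_(i < m) c ord0 i <= \sum_(i < m) rho.
  by apply: ler_sum => i _; case/andP: (cb i).
by rewrite sumr_const card_ord -mulr_natl mrho; lra.
Qed.

(* the line segment principle (Rockafellar, Thm 6.1) *)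
Lemma relbox_segment k m (E : set 'rV[R]_k) (B : 'M[R]_(m, k)) b0 a' rho lam :
  convex_set E -> (forall e, E e -> (e - b0 <= B)%MS) -> relbox_in E B b0 rho ->
  0 < rho -> eclosure E a' -> 0 < lam -> lam < 1 ->
  relbox_in E B (lam *: a' + (1 - lam) *: b0) (rho * (1 - lam) / 2).
Proof.
move=> cE EB box rho0 a'E lam0 lam1 u uB us.
have lam1' : 0 < 1 - lam by rewrite subr_gt0.
set rho' := rho * (1 - lam) / 2.
have rho'0 : 0 < rho' by rewrite divr_gt0 ?mulr_gt0.
have [e' Ee' e'a'] := a'E rho' rho'0.
pose v := (1 - lam)^-1 *: (u - lam *: (e' - a')).
have vB : (v <= B)%MS.
  rewrite /v; have -> : e' - a' = (e' - b0) - (a' - b0) by rewrite opprB addrA subrK.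
  apply: scalemx_sub; apply: addmx_sub => //; rewrite eqmx_opp.
  apply: scalemx_sub; apply: addmx_sub; first exact: EB.
  by rewrite eqmx_opp; apply: eclosure_submx a'E.
have vs j : `|v ord0 j| <= rho.
  have e'j := ltW (eball_coord (ltW rho'0) e'a' j).
  have uj : `|u ord0 j - lam * (e' ord0 j - a' ord0 j)| <= (1 - lam) * rho.
    apply: le_trans (ler_normB _ _) _; rewrite normrM ger0_norm ?(ltW lam0) //.
    have : lam * `|e' ord0 j - a' ord0 j| <= rho'.
      by apply: le_trans e'j; rewrite ler_piMl // ltW.
    have : 2 * rho' = (1 - lam) * rho by rewrite /rho'; field.
    by have := us j; rewrite -/rho'; lra.
  rewrite !mxE normrM ger0_norm; last by rewrite invr_ge0 ltW.
  by rewrite -(ler_pM2l lam1') mulrA mulfV ?gt_eqF // mul1r.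
have := cE _ _ Ee' (box v vB vs) lam (ltW lam0) (ltW lam1).
congr E; apply/matrixP => i j; rewrite /v !mxE.
by field; rewrite gt_eqF.
Qed.

Lemma ri_extend k (C : set 'rV[R]_k) a b : ri C a -> C b ->
  exists2 r, 0 < r & C (a + r *: (a - b)).
Proof.
move=> [Ca [D D0 aD]] Cb.
pose q := dotv (a - b) (a - b); have q0 : 0 <= q := dotv_ge0 _.
have q1 : 0 < q + 1 by rewrite ltr_wpDl.
pose r := D / (q + 1); have r0 : 0 < r by rewrite divr_gt0.
have Dr : D = r * (q + 1) by rewrite divfK // gt_eqF.
exists r => //; apply: aD; split.
  rewrite /eball /= addrAC subrr add0r dotvZl dotvZr -/q Dr.
  have : 0 < r * r by rewrite mulr_gt0.
  nra.
exists 2%N, (fun i : 'I_2 => if i == ord0 then 1 + r else - r),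
  (fun i : 'I_2 => if i == ord0 then a else b); split.
- by move=> i; case: (i == ord0).
- by rewrite !big_ord_recl big_ord0 /=; ring.
- rewrite !big_ord_recl big_ord0 /= addr0.
  by apply/matrixP => i j; rewrite !mxE; ring.
Qed.

Lemma ri_core k (E C : set 'rV[R]_k) a : convex_set E -> E `<=` C ->
  C `<=` eclosure E -> ri C a ->
  exists2 rho, 0 < rho & forall x t, C x ->
    (forall j, `|t * (x - a) ord0 j| <= rho) -> E (a + t *: (x - a)).
Proof.
move=> cE EC CE riCa; have [e0 Ee0 _] := CE _ riCa.1 1 ltr01.
have [m [B [EB spanB]]] := spanning_rows E e0.
have [b0 [rho rho0 box]] := simplex_relbox cE Ee0 EB.
have Eb0 : E b0.
  by rewrite -[b0]addr0; apply: box => [|j]; rewrite ?sub0mx // mxE normr0 ltW.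
have spanb0 e : E e -> (e - b0 <= B)%MS.
  have -> : e - b0 = (e - e0) - (b0 - e0) by rewrite opprB addrA subrK.
  by move=> Ee; apply: addmx_sub; rewrite ?eqmx_opp spanB.
(* a lies strictly between b0 and a point of C beyond a *)
have [r r0 Ca'] := ri_extend riCa (EC _ Eb0).
have r1 : 0 < 1 + r by rewrite addr_gt0.
have lam0 : 0 < (1 + r)^-1 by rewrite invr_gt0.
have lam1 : (1 + r)^-1 < 1 by rewrite invf_lt1 // ltrDl.
have := relbox_segment cE spanb0 box rho0 (CE _ Ca') lam0 lam1.
have -> : (1 + r)^-1 *: (a + r *: (a - b0)) + (1 - (1 + r)^-1) *: b0 = a.
  by apply/matrixP => i j; rewrite !mxE; field; rewrite gt_eqF.
move=> box_a; exists (rho * (1 - (1 + r)^-1) / 2).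
  by rewrite divr_gt0 // mulr_gt0 // subr_gt0.
move=> x t Cx xs; apply: box_a => [|j]; last by rewrite mxE.
have inB y : C y -> (y - b0 <= B)%MS by move=> Cy; apply: eclosure_submx spanb0 _ (CE _ Cy).
have -> : x - a = (x - b0) - (a - b0) by rewrite opprB addrA subrK.
by apply: scalemx_sub; apply: addmx_sub; rewrite ?eqmx_opp inB //; exact: riCa.1.
Qed.

End RelativeInterior.

Section Epigraph.
Variables (R : realType) (N : nat) (f : 'rV[R]_N -> \bar R).

Lemma epi_row_fine z : edom f z -> epi f (row_mx z (const_mx (fine (f z)))).
Proof.
rewrite /epi /edom /= row_mxKl row_mxKr mxE.
by case: (f z) => [r| |] //= _; rewrite leNye.
Qed.

Lemma eball_lsubmx m (W0 W : 'rV[R]_(N + m)) d :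
  eball W0 d W -> eball (lsubmx W0) d (lsubmx W).
Proof.
rewrite /eball /= -!linearB => /(le_lt_trans _); apply.
by rewrite [X in _ <= X]dotv_hsubmx lerDl dotv_ge0.
Qed.

Lemma edom_core (E : set 'rV[R]_(N + 1)) :
  convex_set E -> E `<=` epi f -> epi f `<=` eclosure E ->
  [/\ convex_set (lsubmx @` E), lsubmx @` E `<=` edom f &
      edom f `<=` eclosure (lsubmx @` E)].
Proof.
move=> cE Ef fE; split.
- move=> _ _ [W1 EW1 <-] [W2 EW2 <-] t t0 t1.
  by exists (t *: W1 + (1 - t) *: W2); [exact: cE | rewrite linearD !linearZ].
- move=> _ [W EW <-]; exact: le_lt_trans (Ef _ EW) (ltry _).
- move=> z dz d d0; have [W EW zW] := fE _ (epi_row_fine dz) d d0.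
  by exists (lsubmx W); [exists W | move: (eball_lsubmx zW); rewrite row_mxKl].
Qed.

End Epigraph.

Section Separation.
Variables (R : realType) (N : nat) (f : 'rV[R]_N -> \bar R) (C : set 'rV[R]_N).
Variables (zeta : 'rV[R]_N) (alpha : R).
Variables (E1 : set 'rV[R]_(N + 1)) (E2 : set 'rV[R]_N).
Hypotheses (E1_convex : convex_set E1) (E1_epi : E1 `<=` epi f).
Hypothesis epi_E1 : epi f `<=` eclosure E1.
Hypotheses (E2_convex : convex_set E2) (E2C : E2 `<=` C) (CE2 : C `<=` eclosure E2).
Hypothesis f_ge : forall z, C z -> ((alpha + dotv zeta z)%:E <= f z)%E.

Let height (W : 'rV[R]_(N + 1)) := rsubmx W ord0 ord0 - dotv zeta (lsubmx W) - alpha.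

Definition gap_rel (w : 'rV[R]_N) (t : R) :=
  exists W z, [/\ E1 W, E2 z, w = lsubmx W - z & t = height W].

Lemma gap_rel_convex : convex_rel gap_rel.
Proof.
move=> _ _ _ _ th th0 th1 [W1 [z1 [EW1 Ez1 -> ->]]] [W2 [z2 [EW2 Ez2 -> ->]]].
exists (th *: W1 + (1 - th) *: W2), (th *: z1 + (1 - th) *: z2); split.
- exact: E1_convex.
- exact: E2_convex.
- by apply/matrixP => i j; rewrite !mxE; ring.
- by rewrite /height !linearD !linearZ /= dotvDr !dotvZr !mxE; ring.
Qed.

Lemma gap_rel_ge0 t : gap_rel 0 t -> 0 <= t.
Proof.
move=> [W [z [EW Ez /esym/subr0_eq Wz ->]]].
have := E1_epi EW; rewrite /epi /= Wz => /(le_trans (f_ge (E2C Ez))).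
by rewrite lee_fin /height Wz; lra.
Qed.

Lemma gap_rel_opposite : ri (edom f) `&` ri C !=set0 ->
  forall w t, gap_rel w t -> exists2 r, 0 < r & exists t', gap_rel (- (r *: w)) t'.
Proof.
move=> [z0 [ri1 ri2]] _ _ [W [z [EW Ez -> _]]].
have [cEd Edf fEd] := edom_core E1_convex E1_epi epi_E1.
have [rho1 rho10 core1] := ri_core cEd Edf fEd ri1.
have [rho2 rho20 core2] := ri_core E2_convex E2C CE2 ri2.
have [r1 r10 small1] := small_multiple (lsubmx W - z0) rho10.
have [r2 r20 small2] := small_multiple (z - z0) rho20.
pose r := Num.min r1 r2.
have r0 : 0 < r by rewrite lt_min r10.
have [W' EW' W'E] : (lsubmx @` E1) (z0 + (- r) *: (lsubmx W - z0)).
  apply: core1 => [|j]; first by apply: Edf; exists W.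
  by rewrite mulNr normrN small1 // (ltW r0) ge_min lexx.
have Ez' : E2 (z0 + (- r) *: (z - z0)).
  apply: core2 => [|j]; first exact: E2C.
  by rewrite mulNr normrN small2 // (ltW r0) ge_min lexx orbT.
exists r => //; exists (height W'), W', (z0 + (- r) *: (z - z0)); split => //.
by apply/matrixP => i j; rewrite W'E !mxE; ring.
Qed.

Lemma gap_minorant : ri (edom f) `&` ri C !=set0 ->
  exists b, forall W z, E1 W -> E2 z -> dotv b (lsubmx W - z) <= height W.
Proof.
move=> riI; have [b b_min] := linear_minorant gap_rel_convex
  (gap_rel_opposite riI) gap_rel_ge0.
by exists b => W z EW Ez; apply: b_min; exists W, z.
Qed.

End Separation.

Lemma nearly_convex_separation (R : realType) N (f : 'rV[R]_N -> \bar R)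
    (C : set 'rV[R]_N) (zeta : 'rV[R]_N) (alpha : R) :
  (forall z, f z <> -oo%E) -> nearly_convex_fun f -> nearly_convex_set C ->
  ri (edom f) `&` ri C !=set0 ->
  (forall z, C z -> ((alpha + dotv zeta z)%:E <= f z)%E) ->
  exists b, forall z z', edom f z -> C z' ->
    dotv b (z - z') + dotv zeta z + alpha <= fine (f z).
Proof.
move=> nf [E1 [cE1 E1f fE1]] [E2 [cE2 E2C CE2]] riI f_ge.
have [b b_min] := gap_minorant cE1 E1f fE1 cE2 E2C CE2 f_ge riI.
exists b => z z' dz Cz'.
pose beta : 'rV[R]_(N + 1) := row_mx (- (zeta + b)) (const_mx 1).
have betaE W : dotv beta W = rsubmx W ord0 ord0 - dotv (zeta + b) (lsubmx W).
  by rewrite dotv_hsubmx row_mxKl row_mxKr dotvNl /dotv big_ord1 mxE mul1r addrC.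
pose W0 : 'rV[R]_(N + 1) := row_mx z (const_mx (fine (f z))).
suff : 0 <= dotv beta W0 + dotv b z' - alpha.
  by rewrite betaE /W0 row_mxKl row_mxKr mxE dotvDl dotvBr; lra.
apply: (@ge0_of_small _ _ (\sum_i `|beta ord0 i| + \sum_i `|b ord0 i|)) => d d0.
have [W EW W0W] := fE1 _ (epi_row_fine dz) d d0.
have [z1 Ez1 z'z1] := CE2 _ Cz' d d0.
have Wd i : `|(W - W0) ord0 i| <= d.
  by have := eball_coord (ltW d0) W0W i; rewrite !mxE => /ltW.
have zd i : `|(z1 - z') ord0 i| <= d.
  by have := eball_coord (ltW d0) z'z1 i; rewrite !mxE => /ltW.
have := norm_dotv_le beta Wd; have := norm_dotv_le b zd.
rewrite !ler_norml !dotvBr => /andP[_ h1] /andP[_ h2].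
rewrite betaE dotvDl in h2; rewrite mulrDl.
by have := b_min _ _ EW Ez1; rewrite dotvBr; lra.
Qed.

Lemma separating_const (R : realType) (X Y : Type) (A : set X) (B : set Y)
    (phi : X -> R) (psi : Y -> R) : A !=set0 -> B !=set0 ->
  (forall x y, A x -> B y -> psi y <= phi x) ->
  exists c, (forall x, A x -> c <= phi x) /\ (forall y, B y -> psi y <= c).
Proof.
move=> [x0 Ax0] [y0 By0] psi_phi; exists (inf (phi @` A)); split.
  move=> x Ax; apply: ge_inf; last by exists x.
  by exists (psi y0) => _ [x' Ax' <-]; apply: psi_phi.
move=> y By; apply: lb_le_inf; first by exists (phi x0), x0.
by move=> _ [x Ax <-]; apply: psi_phi.
Qed.

Section OptimalValue.
Variables (R : realType) (n p : nat).
Variables (f : 'rV[R]_(n + p) -> \bar R) (G : 'rV[R]_n -> set 'rV[R]_p).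
Variable xb : 'rV[R]_n.

Lemma optval_le x y : G x y -> (optval f G x <= f (row_mx x y))%E.
Proof. by move=> Gxy; apply: ereal_inf_lbound; exists y. Qed.

Lemma gph_row_mx x y : gph G (row_mx x y) = G x y.
Proof. by rewrite /gph /= row_mxKl row_mxKr. Qed.

Lemma dotv_row_mx0l (xi x : 'rV[R]_n) (y : 'rV[R]_p) :
  dotv (row_mx xi 0) (row_mx x y) = dotv xi x.
Proof. by rewrite dotv_row_mx dotv0l addr0. Qed.

Lemma Seta_nonempty eta : optval f G xb \is a fin_num -> 0 < eta ->
  Seta f G eta xb !=set0.
Proof.
move=> mfin eta0; have [_ [y Gy <-] lt] := lb_ereal_inf_adherent eta0 mfin.
by exists y; split => //; apply: ltW.
Qed.

Lemma esubdiff_optval_minorant eps xi z : esubdiff (optval f G) eps xb xi ->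
  gph G z ->
  ((fine (optval f G xb) - dotv xi xb - eps + dotv (row_mx xi 0) z)%:E <= f z)%E.
Proof.
move=> [mfin m_sub] Gz; rewrite -(hsubmxK z) dotv_row_mx0l.
apply: le_trans (optval_le Gz); have := m_sub (lsubmx z).
rewrite -(fineK mfin); case: (optval f G (lsubmx z)) => [r| |] //= => [|_].
  by rewrite -EFinD !lee_fin dotvBr; lra.
exact: leey.
Qed.

Lemma esubdiff_optval_decomp eps xi eta y :
  proper_fun f -> nearly_convex_fun f -> nearly_convex_set (gph G) ->
  ri (edom f) `&` ri (gph G) !=set0 -> esubdiff (optval f G) eps xb xi ->
  Seta f G eta xb y -> exists2 g, Gam (eta + eps) g & xiset f G xb y g xi.
Proof.
move=> [_ nf] NCf NCg riI xi_sub [Gy fy]; have [mfin _] := xi_sub.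
set zb := row_mx xb y; rewrite -(fineK mfin) in fy.
have fzb_fin : f zb \is a fin_num.
  by rewrite fin_numE; apply/andP; split; apply/eqP => // fzb; move: fy; rewrite fzb.
set F := fine (f zb); have fE : f zb = F%:E by rewrite fineK.
have Fm : F <= fine (optval f G xb) + eta by rewrite -lee_fin EFinD -fE.
pose alpha := F - dotv xi xb - eta - eps.
have f_ge z : gph G z -> ((alpha + dotv (row_mx xi 0) z)%:E <= f z)%E.
  move=> Gz; apply: le_trans (esubdiff_optval_minorant xi_sub Gz).
  by rewrite lee_fin /alpha; lra.
have [b b_sep] := nearly_convex_separation nf NCf NCg riI f_ge.
pose a := row_mx xi 0 + b.
have Gzb : gph G zb by rewrite gph_row_mx.
have dzb : edom f zb by rewrite /edom /= fE ltry.
have sep z z' : edom f z -> gph G z' -> alpha - dotv b z' <= fine (f z) - dotv a z.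
  by move=> dz Gz'; have := b_sep _ _ dz Gz'; rewrite dotvDl dotvBr; lra.
have [c [c_le le_c]] := separating_const (ex_intro _ zb dzb) (ex_intro _ zb Gzb)
  (phi := fun z => fine (f z) - dotv a z) (psi := fun z => alpha - dotv b z) sep.
have aE : dotv a zb = dotv xi xb + dotv b zb by rewrite dotvDl dotv_row_mx0l.
pose g1 := F - dotv a zb - c.
exists (g1, eta + eps - g1).
  split => /=; last by ring.
    by have /= := c_le _ dzb; rewrite -/F /g1; lra.
  by have /= := le_c _ Gzb; rewrite /g1 aE /alpha; lra.
exists a, (- b); split; last by rewrite addrK.
  split => // z; rewrite fE; case Efz: (f z) => [r| |] //=; last by have := nf z.
    have dz : edom f z by rewrite /edom /= Efz ltry.
    by have := c_le _ dz; rewrite Efz /= lee_fin /g1 dotvBr; lra.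
  by rewrite leey.
split => // z' Gz' /=; have := le_c _ Gz'.
by rewrite dotvNl dotvBr /g1 aE /alpha; lra.
Qed.

Lemma xiset_esubdiff y g xi : optval f G xb \is a fin_num ->
  xiset f G xb y g xi -> esubdiff (optval f G) (g.1 + g.2) xb xi.
Proof.
move=> mfin [a [b [[fzb_fin a_sub] [Gzb b_nor] xiE]]]; split => // x.
set m := optval f G in mfin *; set zb := row_mx xb y in fzb_fin a_sub Gzb b_nor.
have mE : m xb = (fine (m xb))%:E by rewrite fineK.
have fE : f zb = (fine (f zb))%:E by rewrite fineK.
have mF : fine (m xb) <= fine (f zb).
  by rewrite -lee_fin -fE -mE optval_le // -gph_row_mx.
have lb : ((dotv xi (x - xb) - (g.1 + g.2) + fine (m xb))%:E <= m x)%E.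
  apply/ereal_infP => _ [y' Gxy' <-].
  have := b_nor _ (eq_ind_r id Gxy' (gph_row_mx x y')).
  have := a_sub (row_mx x y'); rewrite fE.
  have -> : a = row_mx xi 0 - b by rewrite xiE addrK.
  rewrite dotvBl !dotvBr /zb !dotv_row_mx0l.
  case: (f (row_mx x y')) => [r| |] //=; last by move=> _ _; exact: leey.
  by rewrite -EFinD !lee_fin; lra.
rewrite mE; move: lb; case: (m x) => [r| |] //=; last by move=> _; exact: leey.
by rewrite -EFinD !lee_fin; lra.
Qed.

End OptimalValue.

Lemma esubdiff_bigcap (R : realType) k (psi : 'rV[R]_k -> \bar R) eps zb xi :
  (forall eta, 0 < eta -> esubdiff psi (eta + eps) zb xi) -> esubdiff psi eps zb xi.
Proof.
move=> sub; have [psi_fin _] := sub 1 ltr01; split => // z.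
rewrite -(fineK psi_fin); case Ez: (psi z) => [r| |] /=.
- rewrite -EFinD lee_fin -subr_ge0; apply: (@ge0_of_small _ _ 1) => d d0.
  have [_ /(_ z)] := sub d d0; rewrite Ez -(fineK psi_fin) -EFinD lee_fin; lra.
- exact: leey.
- by have [_ /(_ z)] := sub 1 ltr01; rewrite Ez.
Qed.

Unset Implicit Arguments.

Theorem mainTheorem11 (R : realType) (n p : nat)
  (f : 'rV[R]_(n + p) -> \bar R) (G : 'rV[R]_n -> set 'rV[R]_p) (xb : 'rV[R]_n) :
  proper_fun f -> nearly_convex_fun f -> nearly_convex_set (gph G) ->
  optval f G xb \is a fin_num ->
  ri (edom f) `&` ri (gph G) !=set0 ->
  forall eps : R, 0 <= eps ->
    esubdiff (optval f G) eps xb =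
      \bigcap_(eta in [set e : R | 0 < e])
        \bigcap_(y in Seta f G eta xb)
          \bigcup_(g in Gam (eta + eps)) xiset f G xb y g
    /\
    esubdiff (optval f G) eps xb =
      \bigcap_(eta in [set e : R | 0 < e])
        \bigcup_(y in [set: 'rV[R]_p])
          \bigcup_(g in Gam (eta + eps)) xiset f G xb y g.
Proof.
move=> f_proper f_nc G_nc mfin riI eps _.
have decomp xi eta y : esubdiff (optval f G) eps xb xi -> Seta f G eta xb y ->
    exists2 g, Gam (eta + eps) g & xiset f G xb y g xi.
  by move=> xi_sub; apply: esubdiff_optval_decomp.
have recomp xi : (forall eta, 0 < eta ->
    exists y, exists2 g, Gam (eta + eps) g & xiset f G xb y g xi) ->
    esubdiff (optval f G) eps xb xi.
  move=> xi_dec; apply: esubdiff_bigcap => eta eta0.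
  have [y [g [_ _ <-] xi_g]] := xi_dec eta eta0.
  exact: xiset_esubdiff mfin xi_g.
split; apply/seteqP; split => xi /=.
- by move=> xi_sub eta eta0 y Sy; apply: decomp.
- move=> xi_dec; apply: recomp => eta eta0.
  by have [y Sy] := Seta_nonempty mfin eta0; exists y; apply: xi_dec.
- move=> xi_sub eta eta0; have [y Sy] := Seta_nonempty mfin eta0.
  by exists y => //; apply: decomp.
- by move=> xi_dec; apply: recomp => eta eta0; have [y _ xi_y] := xi_dec eta eta0; exists y.
Qed.
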